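(* Let $\mathsf{F},\mathsf{B}:\mathbf{Set}\to\mathbf{Set}$ be functors and let $(X,f)$ be an $(\mathsf{F},\mathsf{B})$-dialgebra whose bisimilarity quotient $(Q,q)$ exists, with canonical map $z:(X,f)\to(Q,q)$. Then for all $x,y\in X$, $x\sim_f y$ if and only if $z(x)=z(y)$. Consequently $\sim_f$ is an equivalence relation on $X$.
   Context: For functors $\mathsf{F},\mathsf{B}:\mathbf{Set}\to\mathbf{Set}$, an $(\mathsf{F},\mathsf{B})$-dialgebra is a pair $(X,f)$ with $X$ a set (the carrier) and $f:\mathsf{F}X\to\mathsf{B}X$ a function. A homomorphism $h:(X,f)\to(Y,g)$ is a function $h:X\to Y$ with $g\circ\mathsf{F}h=\mathsf{B}h\circ f$. Dialgebras and homomorphisms form the category $\mathit{Dialg}(\mathsf{F},\mathsf{B})$. Dialgebraic bisimilarity $\sim_f\subseteq X\times X$ on $(X,f)$ is defined by $x\sim_f y$ iff there exist a dialgebra $(Y,g)$ and a homomorphism $h:(X,f)\to(Y,g)$ with $h(x)=h(y)$. A quotient of an object $A$ in a category is a chosen representative of an equivalence class of epimorphisms out of $A$, where $e:A\to B$ and $e':A\to C$ are equivalent iff there is an isomorphism $i:B\to C$ with $i\circ e=e'$. The bisimilarity quotient of $(X,f)$ is the wide pushout $(Q,q)$ in $\mathit{Dialg}(\mathsf{F},\mathsf{B})$ (if it exists) of the family of all quotients of $(X,f)$ in $\mathit{Dialg}(\mathsf{F},\mathsf{B})$; the induced diagonal morphism $z:(X,f)\to(Q,q)$ is called the canonical map.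 *)

From Stdlib Require Import RelationClasses.

Record functor := Functor {
  fobj :> Type -> Type;
  fmap : forall (A B : Type), (A -> B) -> fobj A -> fobj B;
  fmap_id : forall (A : Type) (a : fobj A), fmap A A (fun x => x) a = a;
  fmap_comp : forall (A B C : Type) (g : B -> C) (h : A -> B) (a : fobj A),
      fmap A C (fun x => g (h x)) a = fmap B C g (fmap A B h a)
}.
Arguments fmap _ {A B} _ _.

Record dialg (F B : functor) := Dialg {
  car : Type;
  str : F car -> B car
}.
Arguments car {F B} _.
Arguments str {F B} _ _.

Section DialgCat.
Variables F B : functor.

Definition is_hom (D E : dialg F B) (h : car D -> car E) : Prop :=
  forall a : F (car D), str E (fmap F h a) = fmap B h (str D a).

Definition is_epi (D E : dialg F B) (h : car D -> car E) : Prop :=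
  is_hom D E h /\
  forall (W : dialg F B) (u v : car E -> car W),
    is_hom E W u -> is_hom E W v ->
    (forall x, u (h x) = v (h x)) -> forall y, u y = v y.

Definition is_iso (D E : dialg F B) (i : car D -> car E) : Prop :=
  is_hom D E i /\
  exists j : car E -> car D, is_hom E D j /\
    (forall x, j (i x) = x) /\ (forall y, i (j y) = y).

Definition epi_equiv (A Y1 Y2 : dialg F B)
    (e1 : car A -> car Y1) (e2 : car A -> car Y2) : Prop :=
  exists i : car Y1 -> car Y2, is_iso Y1 Y2 i /\ forall x, i (e1 x) = e2 x.

(** [e : forall i, A -> C i] is the family of all quotients of [A]: a system of
    representatives (one per equivalence class) of the epimorphisms out of [A]. *)
Definition quotient_family (A : dialg F B) (I : Type) (C : I -> dialg F B)
    (e : forall i, car A -> car (C i)) : Prop :=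
  (forall i, is_epi A (C i) (e i)) /\
  (forall (Y : dialg F B) (h : car A -> car Y), is_epi A Y h ->
      exists i, epi_equiv A (C i) Y (e i) h) /\
  (forall i j, epi_equiv A (C i) (C j) (e i) (e j) -> i = j).

Definition wide_pushout (A : dialg F B) (I : Type) (C : I -> dialg F B)
    (e : forall i, car A -> car (C i))
    (Q : dialg F B) (z : car A -> car Q) (p : forall i, car (C i) -> car Q) : Prop :=
  is_hom A Q z /\
  (forall i, is_hom (C i) Q (p i)) /\
  (forall i x, p i (e i x) = z x) /\
  (forall (Q' : dialg F B) (z' : car A -> car Q') (p' : forall i, car (C i) -> car Q'),
      is_hom A Q' z' -> (forall i, is_hom (C i) Q' (p' i)) ->
      (forall i x, p' i (e i x) = z' x) ->
      (exists u : car Q -> car Q', is_hom Q Q' u /\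
          (forall x, u (z x) = z' x) /\ (forall i y, u (p i y) = p' i y)) /\
      (forall u1 u2 : car Q -> car Q', is_hom Q Q' u1 -> is_hom Q Q' u2 ->
          (forall x, u1 (z x) = z' x) -> (forall i y, u1 (p i y) = p' i y) ->
          (forall x, u2 (z x) = z' x) -> (forall i y, u2 (p i y) = p' i y) ->
          forall q, u1 q = u2 q)).

Definition bisim (D : dialg F B) (x y : car D) : Prop :=
  exists (E : dialg F B) (h : car D -> car E), is_hom D E h /\ h x = h y.

End DialgCat.
Arguments is_hom {F B} D E h.
Arguments is_epi {F B} D E h.
Arguments quotient_family {F B} A I C e.
Arguments wide_pushout {F B} A I C e Q z p.
Arguments bisim {F B} D x y.

From Stdlib Require Import RelationClasses ClassicalEpsilon FunctionalExtensionality ProofIrrelevance.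

(** Let [z : D -> Q] be the canonical map into the wide pushout of all quotients
    [e i : D -> C i] of a dialgebra [D].  One inclusion is immediate: [z] is a
    homomorphism, so [z x = z y] witnesses [bisim D x y].  For the converse, a
    witness [h : D -> E] of bisimilarity is replaced by its corestriction to the
    set-theoretic image of [h].  That image carries a dialgebra structure making
    the corestriction a homomorphism; the key point is that the inclusion of the
    image into [E] has a retraction, so [B] maps it to an injective function and
    the homomorphism square can be checked after composing with it.  Being
    surjective, the corestriction is an epimorphism, hence equivalent to some
    quotient [e i]; since [p i] is a cocone leg, [h x = h y] forces [z x = z y]. *)

Lemma fmap_split_mono_inj (G : functor) (A M : Type) (m : A -> M) (r : M -> A) :
  (forall a, r (m a) = a) ->
  forall b1 b2 : G A, fmap G m b1 = fmap G m b2 -> b1 = b2.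
Proof.
  intros Hrm b1 b2 Hb.
  assert (Hretr : forall b : G A, fmap G r (fmap G m b) = b).
  { intro b. rewrite <- fmap_comp.
    transitivity (fmap G (fun a => a) b); [|apply fmap_id].
    f_equal. apply functional_extensionality. exact Hrm. }
  rewrite <- (Hretr b1), <- (Hretr b2), Hb. reflexivity.
Qed.

Lemma surjective_hom_epi (F B : functor) (D E : dialg F B) (h : car D -> car E) :
  is_hom D E h -> (forall y, exists x, h x = y) -> is_epi D E h.
Proof.
  intros hh hsurj. split; [exact hh|].
  intros W u v _ _ Huv y. destruct (hsurj y) as [x <-]. apply Huv.
Qed.

Section Image.
Variables (F B : functor) (D E : dialg F B) (h : car D -> car E).

Definition image : Type := {y : car E | exists x, h x = y}.

Definition corestr (x : car D) : image := exist _ (h x) (ex_intro _ x eq_refl).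

Definition incl : image -> car E := @proj1_sig _ _.

Definition preimage (w : image) : car D :=
  proj1_sig (constructive_indefinite_description _ (proj2_sig w)).

Lemma h_preimage (w : image) : h (preimage w) = incl w.
Proof.
  unfold preimage. destruct (constructive_indefinite_description _ _). exact e.
Qed.

Lemma corestr_preimage (w : image) : corestr (preimage w) = w.
Proof.
  apply eq_sig_hprop; [intros; apply proof_irrelevance|]. apply h_preimage.
Qed.

Lemma corestr_surjective (w : image) : exists x, corestr x = w.
Proof. exists (preimage w). apply corestr_preimage. Qed.

Definition image_dialg : dialg F B :=
  Dialg F B image (fun a => fmap B corestr (str D (fmap F preimage a))).

(** Given a point of [D], the inclusion of the image has a retraction. *)
Definition incl_retraction (x0 : car D) (y : car E) : image :=
  match excluded_middle_informative (exists x, h x = y) with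
  | left Hy => exist _ y Hy
  | right _ => corestr x0
  end.

Lemma incl_retraction_incl (x0 : car D) (w : image) :
  incl_retraction x0 (incl w) = w.
Proof.
  destruct w as [y Hy]. unfold incl_retraction; simpl.
  destruct (excluded_middle_informative _) as [Hy'|Hy'].
  - f_equal. apply proof_irrelevance.
  - contradiction.
Qed.

Hypothesis hh : is_hom D E h.

(** The corestriction is a homomorphism: both sides of the square become
    [str E (fmap F h a)] after applying the injective map [fmap B incl]. *)
Lemma corestr_hom (x0 : car D) : is_hom D image_dialg corestr.
Proof.
  intro a. apply (fmap_split_mono_inj B _ _ incl (incl_retraction x0)).
  { apply incl_retraction_incl. }
  simpl. rewrite <- !fmap_comp. simpl. change (fun x => h x) with h.
  rewrite <- !hh, <- fmap_comp. f_equal. f_equal.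
  apply functional_extensionality. intro x. apply h_preimage.
Qed.

End Image.

Lemma bisim_epi_witness (F B : functor) (D : dialg F B) (x y : car D) :
  bisim D x y ->
  exists (E : dialg F B) (h : car D -> car E), is_epi D E h /\ h x = h y.
Proof.
  intros [E [h [hh hxy]]].
  exists (image_dialg F B D E h), (corestr F B D E h). split.
  - apply (surjective_hom_epi F B); [exact (corestr_hom F B D E h hh x)|].
    apply corestr_surjective.
  - apply eq_sig_hprop; [intros; apply proof_irrelevance|]. exact hxy.
Qed.

Lemma epi_kernel_below_cocone (F B : functor) (D : dialg F B)
    (I : Type) (C : I -> dialg F B) (e : forall i, car D -> car (C i))
    (Q : Type) (z : car D -> Q) (p : forall i, car (C i) -> Q) :
  quotient_family D I C e ->
  (forall i x, p i (e i x) = z x) ->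
  forall (E : dialg F B) (h : car D -> car E), is_epi D E h ->
  forall x y, h x = h y -> z x = z y.
Proof.
  intros [_ [Hall _]] Hpe E h Hh x y hxy.
  destruct (Hall E h Hh) as [i [j [[_ [k [_ [Hkj _]]]] Hje]]].
  assert (Heq : e i x = e i y).
  { rewrite <- (Hkj (e i x)), <- (Hkj (e i y)), !Hje, hxy. reflexivity. }
  rewrite <- (Hpe i x), <- (Hpe i y), Heq. reflexivity.
Qed.

Lemma kernel_equivalence (A Y : Type) (g : A -> Y) (R : A -> A -> Prop) :
  (forall x y, R x y <-> g x = g y) -> Equivalence R.
Proof.
  intro HR. split.
  - intro x. apply HR. reflexivity.
  - intros x y Hxy. apply HR. symmetry. apply HR. exact Hxy.
  - intros x y w Hxy Hyw. apply HR.
    rewrite (proj1 (HR x y) Hxy). apply HR. exact Hyw.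
Qed.

Theorem proposition2 (F B : functor) (D : dialg F B)
    (I : Type) (C : I -> dialg F B) (e : forall i, car D -> car (C i))
    (HquotFam : quotient_family D I C e)
    (Q : dialg F B) (z : car D -> car Q) (p : forall i, car (C i) -> car Q)
    (Hpushout : wide_pushout D I C e Q z p) :
  (forall x y : car D, bisim D x y <-> z x = z y) /\ Equivalence (bisim D).
Proof.
  destruct Hpushout as [Hz [_ [Hpe _]]].
  assert (Hkernel : forall x y : car D, bisim D x y <-> z x = z y).
  { intros x y. split.
    - intro Hxy. destruct (bisim_epi_witness F B D x y Hxy) as [E [h [Hh hxy]]].
      exact (epi_kernel_below_cocone F B D I C e _ z p HquotFam Hpe E h Hh x y hxy).
    - intro Hzxy. exists Q, z. split; assumption. }
  split; [exact Hkernel|].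
  exact (kernel_equivalence _ _ z _ Hkernel).
Qed.
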